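(* Let $0<\alpha\leqslant1$. Define functions on $[1,\infty)$ recursively by $f_0(x)\equiv1$ and, for $k\geqslant0$, $$f_{k+1}(x)=\max\{y\in(0,1]:\ F_k(y)=\alpha x\},\qquad F_k(y)=\frac1y-y-\frac{1-\alpha}{f_k(1/y)}+f_k(1/y)\quad(0<y\leqslant1).$$ Then the sequence $\{f_k\}$ is well defined and: (a) for every $k\geqslant1$, $f_k$ is a strictly decreasing smooth function on $[1,\infty)$ with $f_k(1)=1$, $\lim_{x\to\infty}f_k(x)=0$, and $f_k(x)>1/x$ for all $x>1$; (b) for every $k\geqslant0$, $F_k$ is a strictly decreasing smooth function on $(0,1]$ with $\lim_{y\to0^+}F_k(y)=\infty$ and $F_k(1)=\alpha$; (c) for all $k\geqslant0$ and $x>1$, $f_{k+1}(x)<f_k(x)$; (d) $\{f_k\}$ converges pointwise on $[1,\infty)$ to $$f_\infty(x)=\max\left\{\frac1x,\ \frac12\left(\alpha(2-x)+\sqrt{\alpha^2(2-x)^2+4(1-\alpha)}\right)\right\}.$$ *)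

From Stdlib Require Import Reals.
From Coquelicot Require Import Coquelicot.
Open Scope R_scope.

Definition Fk (alpha : R) (fk : R -> R) (y : R) : R :=
  / y - y - (1 - alpha) / fk (/ y) + fk (/ y).

Definition sol_set (alpha : R) (fk : R -> R) (x : R) (y : R) : Prop :=
  0 < y <= 1 /\ Fk alpha fk y = alpha * x.

(* f_{k+1}(x) := max of the solution set, realised as its least upper bound;
   that this sup is attained (a genuine max) is part of the theorem. *)
Definition next_f (alpha : R) (fk : R -> R) (x : R) : R :=
  real (Lub_Rbar (sol_set alpha fk x)).

Fixpoint fseq (alpha : R) (k : nat) : R -> R :=
  match k with
  | O => fun _ => 1
  | S k' => next_f alpha (fseq alpha k')
  end.

Definition Fseq (alpha : R) (k : nat) : R -> R := Fk alpha (fseq alpha k).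

Definition is_max_of (E : R -> Prop) (y : R) : Prop :=
  E y /\ forall z, E z -> z <= y.

Definition smooth_on_Ici1 (g : R -> R) : Prop :=
  exists (h : R -> R) (eps : R), 0 < eps /\
    (forall x, 1 <= x -> h x = g x) /\
    (forall (n : nat) x, 1 - eps < x -> ex_derive_n h n x).

Definition smooth_on_Ioc01 (g : R -> R) : Prop :=
  exists (h : R -> R) (eps : R), 0 < eps /\
    (forall y, 0 < y <= 1 -> h y = g y) /\
    (forall (n : nat) y, 0 < y < 1 + eps -> ex_derive_n h n y).

Definition f_inf (alpha : R) (x : R) : R :=
  Rmax (/ x)
    ((alpha * (2 - x) + sqrt (alpha ^ 2 * (2 - x) ^ 2 + 4 * (1 - alpha))) / 2).

From Stdlib Require Import Reals Lra Lia.
From Coquelicot Require Import Coquelicot.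
Open Scope R_scope.

(* Call f admissible if f(1) = 1, f(x) > 1/x for x > 1, f is nonincreasing and
   smooth near [1, +oo), G(u) = psi(f u) + a u with psi(s) = s - (1 - a)/s is
   nondecreasing, and 1/f satisfies a quantitative Lipschitz bound.  Since
   F(y) = (1 - a)/y - y + G(1/y), F decreases with slope at most -1 on (0, 1], so
   F(y) = a x has exactly one solution f'(x) in (0, 1], smooth in x by the inverse
   function theorem, and G'(x) = G(1/f'(x)) shows that f' is again admissible.
   Comparing the G's gives f_{k+1} < f_k, so f_k decreases to some L.  Passing to
   the limit in G_{k+1}(x) = G_k(1/f_{k+1}(x)), where the Lipschitz bound supplies
   the equicontinuity, gives G_oo(x) = G_oo(1/L(x)) for G_oo(u) = psi(L u) + a u;
   iterating u |-> 1/L(u) down to its limit shows G_oo(x) = phi(u) for some u in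
   [1, x], where phi(u) = 1/u + (2a - 1) u is convex.  Together with
   G_oo >= G_oo(1) = 2a and G_oo >= phi this forces G_oo(x) = max(2a, phi(x)), a
   quadratic equation for L(x) whose relevant root is f_oo(x). *)

(** * Smooth functions *)

Definition Cn (U : R -> Prop) (n : nat) (f : R -> R) : Prop :=
  forall k x, (k <= n)%nat -> U x -> ex_derive_n f k x.

Definition Cinf (U : R -> Prop) (f : R -> R) : Prop := forall n, Cn U n f.

Section SmoothCalculus.

Variable U : R -> Prop.
Hypothesis U_open : open U.

Lemma Cn_O f : Cn U 0 f.
Proof. intros [|k] x Hk _; [exact I|lia]. Qed.

Lemma Cn_le n m f : (m <= n)%nat -> Cn U n f -> Cn U m f.
Proof. intros Hm Hf k x Hk Ux; apply Hf; auto; lia. Qed.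

Lemma Cn_succ n f f' :
  (forall x, U x -> is_derive f x (f' x)) -> Cn U n f' -> Cn U (S n) f.
Proof.
  intros Hd Hf'.
  assert (Hn : forall j y, U y -> Derive_n f (S j) y = Derive_n f' j y).
  { induction j as [|j IH]; intros y Uy; simpl.
    - now apply is_derive_unique, Hd.
    - apply Derive_ext_loc, (filter_imp U); [exact IH|now apply U_open]. }
  intros [|[|k]] x Hk Ux; simpl; auto.
  - now exists (f' x); apply Hd.
  - apply (ex_derive_ext_loc (Derive_n f' k)).
    + apply (filter_imp U); [|now apply U_open].
      intros y Uy; symmetry; exact (Hn k y Uy).
    + exact (Hf' (S k) x ltac:(lia) Ux).
Qed.

Lemma Cn_succ_inv n f :
  Cn U (S n) f -> (forall x, U x -> is_derive f x (Derive f x)) /\ Cn U n (Derive f).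
Proof.
  intros Hf; split.
  - intros x Ux; apply Derive_correct; exact (Hf 1%nat x ltac:(lia) Ux).
  - intros [|k] x Hk Ux; [exact I|].
    apply (ex_derive_ext (Derive_n f (S k))); [|exact (Hf (S (S k)) x ltac:(lia) Ux)].
    intros y; rewrite <- Nat.add_1_r, <- Derive_n_comp; reflexivity.
Qed.

Lemma Cn_ext n f g : (forall x, U x -> f x = g x) -> Cn U n f -> Cn U n g.
Proof.
  revert f g; induction n as [|n IH]; intros f g Hfg Hf; [apply Cn_O|].
  destruct (Cn_succ_inv n f Hf) as [Hd Hf'].
  apply (Cn_succ n g (Derive f)); auto.
  intros x Ux; apply (is_derive_ext_loc f); [|now apply Hd].
  apply (filter_imp U); [exact Hfg|now apply U_open].
Qed.

Lemma Cn_const n c : Cn U n (fun _ => c).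
Proof.
  revert c; induction n as [|n IH]; intro c; [apply Cn_O|].
  apply (Cn_succ n _ (fun _ => 0)); auto.
  intros x _; auto_derive; auto.
Qed.

Lemma Cn_id n : Cn U n (fun x => x).
Proof.
  destruct n as [|n]; [apply Cn_O|].
  apply (Cn_succ n _ (fun _ => 1)); [|apply Cn_const].
  intros x _; auto_derive; auto.
Qed.

Lemma Cn_plus n f g : Cn U n f -> Cn U n g -> Cn U n (fun x => f x + g x).
Proof.
  revert f g; induction n as [|n IH]; intros f g Hf Hg; [apply Cn_O|].
  destruct (Cn_succ_inv n f Hf) as [Hdf Hf'], (Cn_succ_inv n g Hg) as [Hdg Hg'].
  apply (Cn_succ n _ (fun x => Derive f x + Derive g x)); auto.
  intros x Ux; apply (is_derive_plus f g); auto.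
Qed.

Lemma Cn_opp n f : Cn U n f -> Cn U n (fun x => - f x).
Proof.
  revert f; induction n as [|n IH]; intros f Hf; [apply Cn_O|].
  destruct (Cn_succ_inv n f Hf) as [Hdf Hf'].
  apply (Cn_succ n _ (fun x => - Derive f x)); auto.
  intros x Ux; apply (is_derive_opp f); auto.
Qed.

Lemma Cn_mult n f g : Cn U n f -> Cn U n g -> Cn U n (fun x => f x * g x).
Proof.
  revert f g; induction n as [|n IH]; intros f g Hf Hg; [apply Cn_O|].
  destruct (Cn_succ_inv n f Hf) as [Hdf Hf'], (Cn_succ_inv n g Hg) as [Hdg Hg'].
  apply (Cn_succ n _ (fun x => Derive f x * g x + f x * Derive g x)).
  - intros x Ux; apply (is_derive_mult f g); auto; intros; apply Rmult_comm.
  - apply Cn_plus; apply IH; auto; apply (Cn_le (S n)); auto.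
Qed.

Lemma Cn_inv n f : (forall x, U x -> f x <> 0) -> Cn U n f -> Cn U n (fun x => / f x).
Proof.
  intros Hnz; revert f Hnz; induction n as [|n IH]; intros f Hnz Hf; [apply Cn_O|].
  destruct (Cn_succ_inv n f Hf) as [Hdf Hf'].
  apply (Cn_succ n _ (fun x => - Derive f x * (/ f x * / f x))).
  - intros x Ux.
    replace (- Derive f x * (/ f x * / f x)) with (- Derive f x / f x ^ 2)
      by (field; auto).
    apply is_derive_inv; auto.
  - apply Cn_mult; [now apply Cn_opp|].
    assert (Hi : Cn U n (fun x => / f x)) by (apply IH; auto; apply (Cn_le (S n)); auto).
    now apply Cn_mult.
Qed.

End SmoothCalculus.

Lemma Cn_comp (U V : R -> Prop) n f g : open U -> open V -> (forall x, U x -> V (g x)) ->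
  Cn V n f -> Cn U n g -> Cn U n (fun x => f (g x)).
Proof.
  intros U_open V_open HgV; revert f; induction n as [|n IH]; intros f Hf Hg; [apply Cn_O|].
  destruct (Cn_succ_inv V n f Hf) as [Hdf Hf'], (Cn_succ_inv U n g Hg) as [Hdg Hg'].
  apply (Cn_succ U U_open n _ (fun x => Derive f (g x) * Derive g x)).
  - intros x Ux; rewrite Rmult_comm; apply (is_derive_comp f g); auto.
  - apply Cn_mult; auto; apply IH; auto; apply (Cn_le U (S n)); auto.
Qed.

Lemma Cinf_subset (U U' : R -> Prop) f : (forall x, U' x -> U x) -> Cinf U f -> Cinf U' f.
Proof. intros HU Hf n k x Hk Ux; apply (Hf n); auto. Qed.

Lemma open_interval lo hi : open (fun y => lo < y < hi).
Proof. apply open_and; [apply open_gt|apply open_lt]. Qed.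

(** * Inverses of decreasing functions *)

Lemma Rabs_Rinv_sub_le Q D : D <> 0 -> Rabs (Q - D) <= Rabs D / 2 ->
  Rabs (/ Q - / D) <= 2 * Rabs (Q - D) / (Rabs D * Rabs D).
Proof.
  intros HD HQD.
  assert (HaD : 0 < Rabs D) by now apply Rabs_pos_lt.
  assert (HaQ : Rabs D / 2 <= Rabs Q).
  { assert (H := Rabs_triang_inv D (D - Q)).
    replace (D - (D - Q)) with Q in H by ring.
    rewrite Rabs_minus_sym in H; lra. }
  assert (HQ : Q <> 0) by (intros ->; rewrite Rabs_R0 in HaQ; lra).
  replace (/ Q - / D) with ((D - Q) / (Q * D)) by (field; auto).
  replace (2 * Rabs (Q - D) / (Rabs D * Rabs D))
    with (Rabs (Q - D) * / (Rabs D / 2 * Rabs D)) by (field; lra).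
  unfold Rdiv; rewrite Rabs_mult, Rabs_inv, Rabs_mult, Rabs_minus_sym.
  apply Rmult_le_compat_l; [apply Rabs_pos|].
  apply Rinv_le_contravar; [nra|].
  apply Rmult_le_compat_r; lra.
Qed.

Lemma is_derive_inverse (F g : R -> R) (W : R -> Prop) x0 D :
  open W -> W x0 -> (forall x, W x -> F (g x) = x) -> continuous g x0 ->
  is_derive F (g x0) D -> D <> 0 -> is_derive g x0 (/ D).
Proof.
  intros W_open Wx0 HFg Hg HF HD.
  apply is_derive_Reals; apply is_derive_Reals in HF.
  intros eps Heps.
  assert (HaD : 0 < Rabs D) by now apply Rabs_pos_lt.
  set (e := Rmin (Rabs D / 2) (eps * (Rabs D * Rabs D) / 4)).
  assert (He : 0 < e).
  { assert (0 < eps * (Rabs D * Rabs D)) by (apply Rmult_lt_0_compat; nra).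
    apply Rmin_pos; lra. }
  destruct (HF e He) as [d1 Hd1].
  destruct (proj1 (filterlim_locally g (g x0)) Hg d1) as [d2 Hd2].
  destruct (W_open x0 Wx0) as [d3 Hd3].
  assert (Hd : 0 < Rmin d2 d3) by (apply Rmin_pos; apply cond_pos).
  exists (mkposreal _ Hd); simpl; intros h Hh0 Hh.
  assert (Hball : forall d : posreal, Rmin d2 d3 <= d -> ball x0 d (x0 + h)).
  { intros d Hdd; change (Rabs (x0 + h - x0) < d).
    replace (x0 + h - x0) with h by ring; lra. }
  assert (Wh : W (x0 + h)) by (apply Hd3, Hball, Rmin_r).
  set (k := g (x0 + h) - g x0).
  assert (Hk : Rabs k < d1) by apply (Hd2 (x0 + h)), Hball, Rmin_l.
  assert (Hk0 : k <> 0).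
  { intros Ek; apply Hh0.
    assert (E : F (g (x0 + h)) = F (g x0)) by (f_equal; unfold k in Ek; lra).
    rewrite !HFg in E; auto; lra. }
  assert (HQ := Hd1 k Hk0 Hk).
  replace (g x0 + k) with (g (x0 + h)) in HQ by (unfold k; ring).
  rewrite !HFg, Rplus_minus_l in HQ; auto.
  replace (k / h) with (/ (h / k)) by (field; auto).
  eapply Rle_lt_trans; [apply Rabs_Rinv_sub_le; auto; eapply Rlt_le, Rlt_le_trans;
    [exact HQ|apply Rmin_l]|].
  apply (Rmult_lt_reg_r (Rabs D * Rabs D)); [nra|].
  unfold Rdiv; rewrite Rmult_assoc, Rinv_l, Rmult_1_r by nra.
  assert (e <= eps * (Rabs D * Rabs D) / 4) by apply Rmin_r.
  lra.
Qed.

Lemma Cinf_inverse (F g : R -> R) (V W : R -> Prop) :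
  open V -> open W -> Cinf V F -> (forall y, V y -> Derive F y <> 0) ->
  (forall x, W x -> V (g x)) -> (forall x, W x -> F (g x) = x) ->
  (forall x, W x -> continuous g x) -> Cinf W g.
Proof.
  intros V_open W_open HF HdF HgV HFg Hg n; induction n as [|n IH]; [apply Cn_O|].
  destruct (Cn_succ_inv V n F (HF (S n))) as [HF' HF''].
  apply (Cn_succ W W_open n g (fun x => / Derive F (g x))).
  - intros x Wx; apply (is_derive_inverse F g W); auto.
  - apply Cn_inv; auto; apply (Cn_comp W V); auto.
Qed.

Lemma decreasing_of_derive_neg (F : R -> R) lo hi :
  (forall y, lo < y < hi -> is_derive F y (Derive F y)) ->
  (forall y, lo < y < hi -> Derive F y < 0) ->
  forall y z, lo < y -> y < z -> z < hi -> F z < F y.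
Proof.
  intros HdF Hneg y z Hy Hyz Hz.
  enough (- F y < - F z) by lra.
  apply (incr_function (fun t => - F t) lo hi (fun t => - Derive F t)); auto;
    simpl; intros t Ht1 Ht2.
  - apply (is_derive_opp F); auto.
  - assert (Derive F t < 0) by auto; lra.
Qed.

Lemma decreasing_inverse_continuous (F g : R -> R) lo hi (W : R -> Prop) x0 :
  (forall y z, lo < y -> y < z -> z < hi -> F z < F y) ->
  open W -> (forall x, W x -> lo < g x < hi /\ F (g x) = x) -> W x0 ->
  continuous g x0.
Proof.
  intros Hdecr W_open Hg Wx0.
  destruct (Hg x0 Wx0) as [Hgx0 HFx0].
  apply filterlim_locally; intros eps.
  set (y1 := Rmax (g x0 - eps / 2) ((lo + g x0) / 2)).
  set (y2 := Rmin (g x0 + eps / 2) ((g x0 + hi) / 2)).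
  assert (Heps := cond_pos eps).
  assert (Hy1 : g x0 - eps / 2 <= y1 /\ (lo + g x0) / 2 <= y1 /\ y1 < g x0).
  { split; [apply Rmax_l|split; [apply Rmax_r|apply Rmax_lub_lt; lra]]. }
  assert (Hy2 : y2 <= g x0 + eps / 2 /\ y2 <= (g x0 + hi) / 2 /\ g x0 < y2).
  { split; [apply Rmin_l|split; [apply Rmin_r|apply Rmin_glb_lt; lra]]. }
  assert (HF1 : x0 < F y1) by (rewrite <- HFx0; apply Hdecr; lra).
  assert (HF2 : F y2 < x0) by (rewrite <- HFx0; apply Hdecr; lra).
  assert (Hnear : locally x0 (fun x => W x /\ F y2 < x /\ x < F y1)).
  { apply W_open in Wx0.
    apply (filter_and _ _ Wx0), (filter_and (fun x => F y2 < x)).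
    - now apply open_gt.
    - now apply open_lt. }
  revert Hnear; apply filter_imp; intros x (Wx & Hx2 & Hx1).
  destruct (Hg x Wx) as [Hgx HFx].
  assert (y1 < g x).
  { destruct (Rlt_or_le y1 (g x)) as [|[Hlt|Heq]]; auto.
    - assert (F y1 < F (g x)) by (apply Hdecr; lra); lra.
    - rewrite Heq in HFx; lra. }
  assert (g x < y2).
  { destruct (Rlt_or_le (g x) y2) as [|[Hlt|Heq]]; auto.
    - assert (F (g x) < F y2) by (apply Hdecr; lra); lra.
    - rewrite <- Heq in HFx; lra. }
  change (Rabs (g x - g x0) < eps); apply Rabs_def1; lra.
Qed.

Lemma IVT_decreasing (F : R -> R) p q v :
  (forall t, p <= t <= q -> continuity_pt F t) -> p < q -> F q < v <= F p ->
  exists z, p <= z <= q /\ F z = v.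
Proof.
  intros HF Hpq [Hq Hp].
  destruct (Req_dec (F p) v) as [E|E]; [exists p; split; [lra|auto]|].
  destruct (Ranalysis5.IVT_interv (fun t => v - F t) p q) as [z [Hz Ez]]; try lra.
  - intros t Ht; apply continuity_pt_minus; [apply continuity_pt_const; intros ? ?; auto|auto].
  - exists z; split; auto; lra.
Qed.

Lemma Lub_Rbar_unique (E : R -> Prop) z : (forall y, E y <-> y = z) -> real (Lub_Rbar E) = z.
Proof.
  intros HE; rewrite (is_lub_Rbar_unique E z); auto; split.
  - intros y Ey; apply HE in Ey; subst; apply Rle_refl.
  - intros b Hb; apply Hb, HE; reflexivity.
Qed.

Lemma Cinf_decreasing_inverse (F : R -> R) lo hi (W : R -> Prop) :
  open W -> Cinf (fun y => lo < y < hi) F -> (forall y, lo < y < hi -> Derive F y < 0) ->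
  (forall x, W x -> exists y, lo < y < hi /\ F y = x) ->
  exists g, Cinf W g /\ forall x, W x -> lo < g x < hi /\ F (g x) = x.
Proof.
  intros W_open HF Hneg Hsurj.
  destruct (Cn_succ_inv _ 0 F (HF 1%nat)) as [HdF _].
  assert (Hdecr := decreasing_of_derive_neg F lo hi HdF Hneg).
  set (g := fun x => real (Lub_Rbar (fun y => lo < y < hi /\ F y = x))).
  assert (Hg : forall x, W x -> lo < g x < hi /\ F (g x) = x).
  { intros x Wx; destruct (Hsurj x Wx) as [y [Hy HFy]].
    replace (g x) with y; [auto|symmetry; apply Lub_Rbar_unique].
    intros z; split; [|intros ->; auto].
    intros [Hz HFz]; destruct (Rtotal_order z y) as [Hzy|[Hzy|Hzy]]; auto.
    - assert (F y < F z) by (apply Hdecr; lra); lra.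
    - assert (F z < F y) by (apply Hdecr; lra); lra. }
  exists g; split; auto.
  apply (Cinf_inverse F g (fun y => lo < y < hi)); auto.
  - apply open_interval.
  - intros y Hy; apply Rlt_not_eq, Hneg, Hy.
  - intros x Wx; apply Hg, Wx.
  - intros x Wx; apply Hg, Wx.
  - intros x Wx; apply (decreasing_inverse_continuous F g lo hi W); auto.
Qed.

Lemma is_derive_le_of_left_slope (F : R -> R) lo y c D :
  lo < y -> (forall t, lo < t < y -> F y - F t <= c * (y - t)) ->
  is_derive F y D -> D <= c.
Proof.
  intros Hy Hslope HD; apply is_derive_Reals in HD.
  destruct (Rle_or_lt D c) as [|Hc]; auto; exfalso.
  destruct (HD (D - c) ltac:(lra)) as [d Hd].
  assert (Hd0 := cond_pos d).
  set (h := - Rmin (d / 2) ((y - lo) / 2)).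
  assert (Hh : - (d / 2) <= h /\ - ((y - lo) / 2) <= h /\ h < 0).
  { assert (H := Rmin_pos (d / 2) ((y - lo) / 2) ltac:(lra) ltac:(lra)).
    unfold h; split; [|split]; [apply Ropp_le_contravar, Rmin_l|
      apply Ropp_le_contravar, Rmin_r|lra]. }
  assert (Hq := Hd h ltac:(lra) ltac:(rewrite Rabs_left; lra)).
  assert (Hs := Hslope (y + h) ltac:(lra)).
  assert (Hle : (F (y + h) - F y) / h <= c).
  { apply (Rmult_le_reg_r (- h)); [lra|].
    replace ((F (y + h) - F y) / h * - h) with (F y - F (y + h)) by (field; lra).
    replace (y - (y + h)) with (- h) in Hs by ring; lra. }
  assert (H := Rle_abs (- ((F (y + h) - F y) / h - D))).
  rewrite Rabs_Ropp in H; lra.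
Qed.

(** * One step of the recursion *)

Definition psi (a s : R) : R := s - (1 - a) / s.

Definition Gk (a : R) (f : R -> R) (u : R) : R := psi a (f u) + a * u.

Definition phi (a u : R) : R := psi a (/ u) + a * u.

Lemma psi_lt a s t : a <= 1 -> 0 < s -> s < t -> psi a s < psi a t.
Proof.
  intros Ha Hs Hst; unfold psi, Rdiv.
  assert (/ t <= / s) by (apply Rinv_le_contravar; lra).
  assert ((1 - a) * / t <= (1 - a) * / s) by (apply Rmult_le_compat_l; lra).
  lra.
Qed.

Lemma psi_le a s t : a <= 1 -> 0 < s -> s <= t -> psi a s <= psi a t.
Proof. intros Ha Hs [Hst|<-]; [left; apply psi_lt; auto|apply Rle_refl]. Qed.

Lemma psi_inj a s t : a <= 1 -> 0 < s -> 0 < t -> psi a s = psi a t -> s = t.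
Proof.
  intros Ha Hs Ht E; destruct (Rtotal_order s t) as [H|[H|H]]; auto.
  - apply (psi_lt a) in H; auto; lra.
  - apply (psi_lt a) in H; auto; lra.
Qed.

Lemma Fk_Gk a f y : Fk a f y = (1 - a) / y - y + Gk a f (/ y).
Proof. unfold Fk, Gk, psi, Rdiv; ring. Qed.

Lemma Fk_Cinf a h c : 0 < c -> (forall x, c < x -> 0 < h x) ->
  Cinf (fun x => c < x) h -> Cinf (fun y => 0 < y < / c) (Fk a h).
Proof.
  intros Hc Hpos Hh n.
  set (V := fun y => 0 < y < / c).
  assert (V_open : open V) by apply open_interval.
  assert (HV : forall y, V y -> c < / y).
  { intros y [Hy Hyc]; rewrite <- (Rinv_inv c); apply Rinv_lt_contravar; auto.
    apply Rmult_lt_0_compat; auto; now apply Rinv_0_lt_compat. }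
  assert (Hinv : Cn V n (fun y => / y)).
  { apply Cn_inv; auto; [intros y [Hy _]; lra|apply Cn_id; auto]. }
  assert (Hhinv : Cn V n (fun y => h (/ y)))
    by (apply (Cn_comp V (fun x => c < x)); auto; apply open_gt).
  assert (Hinvh : Cn V n (fun y => / h (/ y))).
  { apply Cn_inv; auto; intros y Hy; specialize (Hpos _ (HV y Hy)); lra. }
  apply (Cn_ext V V_open n (fun y => (/ y + - y) + (- ((1 - a) * / h (/ y)) + h (/ y)))).
  - intros y _; unfold Fk, Rdiv, Rminus; ring.
  - apply Cn_plus; auto; apply Cn_plus; auto.
    + apply Cn_opp, Cn_id; auto.
    + apply Cn_opp, Cn_mult; auto; apply Cn_const; auto.
Qed.

Record admissible (a : R) (f : R -> R) : Prop := {
  adm_one : f 1 = 1;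
  adm_gt_inv : forall x, 1 < x -> / x < f x;
  adm_decr : forall u v, 1 <= u -> u <= v -> f v <= f u;
  adm_Gk_incr : forall u v, 1 <= u -> u <= v -> Gk a f u <= Gk a f v;
  adm_inv_lipschitz : forall u v X, 1 <= u -> u <= v -> v <= X ->
    (/ f v - / f u) * (/ (X * X) + 1 - a) <= a * (v - u);
  adm_smooth : exists h c, 0 < c < 1 /\ (forall x, 1 <= x -> h x = f x) /\
    (forall x, c < x -> 0 < h x) /\ Cinf (fun x => c < x) h }.

Lemma Rinv_ge_1 y : 0 < y <= 1 -> 1 <= / y.
Proof. intros Hy; rewrite <- Rinv_1; apply Rinv_le_contravar; lra. Qed.

Lemma Rinv_gt_1 y : 0 < y < 1 -> 1 < / y.
Proof. intros Hy; rewrite <- Rinv_1; apply Rinv_lt_contravar; lra. Qed.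

Lemma Rinv_in_Ioc01 x : 1 <= x -> 0 < / x <= 1.
Proof.
  intros Hx; split; [apply Rinv_0_lt_compat; lra|].
  rewrite <- Rinv_1; apply Rinv_le_contravar; lra.
Qed.

Lemma Rinv_in_Ioo01 x : 1 < x -> 0 < / x < 1.
Proof.
  intros Hx; split; [apply Rinv_0_lt_compat; lra|].
  rewrite <- Rinv_1; apply Rinv_lt_contravar; lra.
Qed.

Section Admissible.

Variables (a : R) (f : R -> R).
Hypotheses (Ha : 0 < a <= 1) (Hf : admissible a f).

Lemma adm_bounds x : 1 <= x -> / x <= f x <= 1.
Proof.
  intros Hx; split.
  - destruct (Rle_lt_or_eq_dec 1 x Hx) as [Hx1|<-].
    + now left; apply (adm_gt_inv a f Hf).
    + rewrite (adm_one a f Hf), Rinv_1; lra.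
  - rewrite <- (adm_one a f Hf); apply (adm_decr a f Hf); auto; lra.
Qed.

Lemma adm_pos x : 1 <= x -> 0 < f x.
Proof.
  intros Hx; assert (Hx0 : 0 < / x) by (apply Rinv_0_lt_compat; lra).
  assert (Hb := adm_bounds x Hx); lra.
Qed.

Lemma Gk_one : Gk a f 1 = 2 * a.
Proof. unfold Gk, psi; rewrite (adm_one a f Hf); field. Qed.

Lemma phi_le_Gk u : 1 <= u -> phi a u <= Gk a f u.
Proof.
  intros Hu; unfold phi, Gk.
  apply Rplus_le_compat_r, psi_le; [lra|apply Rinv_0_lt_compat; lra|].
  apply adm_bounds, Hu.
Qed.

Lemma phi_lt_Gk u : 1 < u -> phi a u < Gk a f u.
Proof.
  intros Hu; unfold phi, Gk.
  apply Rplus_lt_compat_r, psi_lt; [lra|apply Rinv_0_lt_compat; lra|].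
  apply (adm_gt_inv a f Hf), Hu.
Qed.

Lemma Fk_one : Fk a f 1 = a.
Proof. unfold Fk; rewrite Rinv_1, (adm_one a f Hf); field. Qed.

Lemma Fk_decr y z : 0 < y -> y <= z -> z <= 1 -> Fk a f z + (z - y) <= Fk a f y.
Proof.
  intros Hy Hyz Hz; rewrite !Fk_Gk.
  assert (/ z <= / y) by (apply Rinv_le_contravar; lra).
  assert (Gk a f (/ z) <= Gk a f (/ y)) by (apply (adm_Gk_incr a f Hf); auto; apply Rinv_ge_1; lra).
  assert ((1 - a) / z <= (1 - a) / y) by (apply Rmult_le_compat_l; lra).
  lra.
Qed.

Lemma Fk_lt y z : 0 < y -> y < z -> z <= 1 -> Fk a f z < Fk a f y.
Proof. intros Hy Hyz Hz; assert (H := Fk_decr y z Hy (Rlt_le _ _ Hyz) Hz); lra. Qed.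

Lemma Fk_inj y z : 0 < y <= 1 -> 0 < z <= 1 -> Fk a f y = Fk a f z -> y = z.
Proof.
  intros Hy Hz E; destruct (Rtotal_order y z) as [H|[H|H]]; auto.
  - assert (Fk a f z < Fk a f y) by (apply Fk_lt; lra); lra.
  - assert (Fk a f y < Fk a f z) by (apply Fk_lt; lra); lra.
Qed.

Lemma Fk_Gk_phi y : 0 < y -> (1 - a) / y - y + phi a (/ y) = a / y.
Proof. intros Hy; unfold phi, psi; field; lra. Qed.

Lemma Fk_ge y : 0 < y <= 1 -> a / y <= Fk a f y.
Proof.
  intros Hy; rewrite Fk_Gk, <- Fk_Gk_phi by lra.
  apply Rplus_le_compat_l, phi_le_Gk, Rinv_ge_1, Hy.
Qed.

Lemma Fk_gt y : 0 < y < 1 -> a / y < Fk a f y.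
Proof.
  intros Hy; rewrite Fk_Gk, <- Fk_Gk_phi by lra.
  apply Rplus_lt_compat_l, phi_lt_Gk, Rinv_gt_1, Hy.
Qed.

Lemma next_f_eq x y : 0 < y <= 1 -> Fk a f y = a * x -> next_f a f x = y.
Proof.
  intros Hy HFy; apply Lub_Rbar_unique; intros z; split.
  - intros [Hz HFz]; apply Fk_inj; auto; congruence.
  - intros ->; split; auto.
Qed.

Lemma Fk_decreasing_extension : exists F b, 1 < b /\
  Cinf (fun y => 0 < y < b) F /\ (forall y, 0 < y < b -> Derive F y < 0) /\
  (forall y, 0 < y <= 1 -> F y = Fk a f y).
Proof.
  destruct (adm_smooth a f Hf) as (h & c & Hc & Hhf & Hpos & Hh).
  assert (Hc1 : 1 < / c) by (apply Rinv_gt_1; lra).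
  assert (HF := Fk_Cinf a h c ltac:(lra) Hpos Hh).
  assert (Hext : forall y, 0 < y <= 1 -> Fk a h y = Fk a f y).
  { intros y Hy; unfold Fk; rewrite Hhf; auto; apply Rinv_ge_1, Hy. }
  destruct (Cn_succ_inv _ 1 (Fk a h) (HF 2%nat)) as [HdF HdF'].
  (* F' <= -1 on (0, 1] and F' is continuous at 1, so F' < 0 a little beyond 1. *)
  assert (Hle : forall y, 0 < y <= 1 -> Derive (Fk a h) y <= -1).
  { intros y Hy; apply (is_derive_le_of_left_slope (Fk a h) 0 y); [lra| |apply HdF; lra].
    intros t Ht; rewrite !Hext by lra.
    assert (H := Fk_decr t y ltac:(lra) ltac:(lra) ltac:(lra)); lra. }
  assert (Hcont : continuous (Derive (Fk a h)) 1)
    by (apply (@ex_derive_continuous R_AbsRing R_NormedModule), (HdF' 1%nat); lia || lra).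
  destruct (proj1 (filterlim_locally _ _) Hcont (mkposreal (1 / 2) ltac:(lra))) as [d Hd].
  set (b := 1 + Rmin d (/ c - 1) / 2).
  assert (Hb : 1 < b /\ b - 1 < d /\ b < / c).
  { assert (Hm := Rmin_pos d (/ c - 1) (cond_pos d) ltac:(lra)).
    assert (Hm1 := Rmin_l d (/ c - 1)); assert (Hm2 := Rmin_r d (/ c - 1)).
    unfold b; lra. }
  exists (Fk a h), b; split; [lra|split; [|split; [|exact Hext]]].
  - apply (Cinf_subset (fun y => 0 < y < / c)); auto; intros y Hy; lra.
  - intros y Hy; destruct (Rle_or_lt y 1) as [Hy1|Hy1]; [specialize (Hle y ltac:(lra)); lra|].
    assert (Hball : ball 1 d y) by (change (Rabs (y - 1) < d); rewrite Rabs_pos_eq; lra).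
    specialize (Hd y Hball); change (Rabs (Derive (Fk a h) y - Derive (Fk a h) 1) < 1 / 2) in Hd.
    assert (H1 := Hle 1 ltac:(lra)); assert (H2 := Rle_abs (Derive (Fk a h) y - Derive (Fk a h) 1)).
    lra.
Qed.

Lemma Fk_extension_attains (F : R -> R) b x : 1 < b ->
  (forall y, 0 < y < b -> is_derive F y (Derive F y)) ->
  (forall y, 0 < y <= 1 -> F y = Fk a f y) ->
  0 < x -> F ((1 + b) / 2) < a * x -> exists y, 0 < y < b /\ F y = a * x.
Proof.
  intros Hb HdF HFf Hx HFm.
  set (y0 := Rmin 1 (/ x)).
  assert (Hy0 : 0 < y0 <= 1 /\ a * x <= F y0).
  { unfold y0; destruct (Rle_or_lt 1 x) as [Hx1|Hx1].
    - assert (Hxi := Rinv_in_Ioc01 x Hx1).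
      rewrite Rmin_right, HFf by lra; split; auto.
      assert (H := Fk_ge (/ x) Hxi); unfold Rdiv in H; rewrite Rinv_inv in H; exact H.
    - rewrite Rmin_left by (left; apply Rinv_gt_1; lra).
      rewrite HFf, Fk_one by lra; split; [lra|nra]. }
  destruct (IVT_decreasing F y0 ((1 + b) / 2) (a * x)) as [y [Hy HFy]]; try lra.
  - intros t Ht; apply derivable_continuous_pt; exists (Derive F t).
    apply is_derive_Reals, HdF; lra.
  - exists y; split; [lra|auto].
Qed.

Lemma next_f_extension : exists g c, 0 < c < 1 /\
  (forall x, c < x -> 0 < g x) /\ Cinf (fun x => c < x) g /\
  (forall x, 1 <= x -> 0 < g x <= 1 /\ Fk a f (g x) = a * x).
Proof.
  destruct Fk_decreasing_extension as (F & b & Hb & HF & Hneg & HFf).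
  destruct (Cn_succ_inv _ 0 F (HF 1%nat)) as [HdF _].
  assert (Hdecr := decreasing_of_derive_neg F 0 b HdF Hneg).
  assert (HF1 : F 1 = a) by (rewrite HFf by lra; apply Fk_one).
  set (c := Rmax (F ((1 + b) / 2) / a) (1 / 2)).
  assert (Hc : F ((1 + b) / 2) / a <= c /\ 1 / 2 <= c /\ c < 1).
  { split; [apply Rmax_l|split; [apply Rmax_r|apply Rmax_lub_lt; [|lra]]].
    apply Rlt_div_l; [lra|rewrite Rmult_1_l, <- HF1; apply Hdecr; lra]. }
  set (Fa := fun y => / a * F y).
  assert (HFa : Cinf (fun y => 0 < y < b) Fa).
  { intros n; apply Cn_mult; [apply open_interval|apply Cn_const, open_interval|apply HF]. }
  assert (Hneg' : forall y, 0 < y < b -> Derive Fa y < 0).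
  { intros y Hy; unfold Fa; rewrite Derive_scal.
    assert (Derive F y < 0) by auto; assert (0 < / a) by (apply Rinv_0_lt_compat; lra); nra. }
  assert (Hsurj : forall x, c < x -> exists y, 0 < y < b /\ Fa y = x).
  { intros x Hx; destruct (Fk_extension_attains F b x) as [y [Hy HFy]]; auto; try lra.
    - assert (Hm : F ((1 + b) / 2) / a < x) by lra.
      apply Rlt_div_l in Hm; lra.
    - exists y; split; auto; unfold Fa; rewrite HFy; field; lra. }
  destruct (Cinf_decreasing_inverse Fa 0 b (fun x => c < x) (open_gt c) HFa Hneg' Hsurj)
    as [g [Hg Hgspec]].
  assert (HFg : forall x, c < x -> F (g x) = a * x).
  { intros x Hx; destruct (Hgspec x Hx) as [_ E]; unfold Fa in E.
    transitivity (a * (/ a * F (g x))); [field; lra|now rewrite E]. }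
  exists g, c; split; [lra|split; [intros x Hx; apply Hgspec; auto|split; auto]].
  intros x Hx; destruct (Hgspec x ltac:(lra)) as [Hgx _].
  assert (Hg1 : g x <= 1).
  { destruct (Rle_or_lt (g x) 1) as [|Hgt]; auto.
    assert (Hlt : F (g x) < F 1) by (apply Hdecr; lra).
    rewrite HFg in Hlt by lra; nra. }
  split; [lra|]; rewrite <- HFf, HFg; lra.
Qed.

Lemma next_f_spec x : 1 <= x -> 0 < next_f a f x <= 1 /\ Fk a f (next_f a f x) = a * x.
Proof.
  intros Hx; destruct next_f_extension as (g & c & _ & _ & _ & Hg).
  destruct (Hg x Hx) as [Hgx HFg].
  rewrite (next_f_eq x (g x)); auto.
Qed.

Lemma next_f_is_max x : 1 <= x -> is_max_of (sol_set a f x) (next_f a f x).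
Proof.
  intros Hx; destruct (next_f_spec x Hx) as [Hy HFy]; split; [split; auto|].
  intros z [Hz HFz]; right; apply Fk_inj; auto; congruence.
Qed.

Lemma next_f_one : next_f a f 1 = 1.
Proof. apply next_f_eq; [lra|rewrite Fk_one; ring]. Qed.

Lemma next_f_gt_inv x : 1 < x -> / x < next_f a f x.
Proof.
  intros Hx; destruct (next_f_spec x ltac:(lra)) as [Hy HFy].
  assert (Hxi := Rinv_in_Ioo01 x Hx).
  destruct (Rlt_or_le (/ x) (next_f a f x)) as [|Hle]; auto.
  assert (H := Fk_gt (/ x) Hxi); unfold Rdiv in H; rewrite Rinv_inv in H.
  destruct Hle as [Hlt|Heq].
  - assert (Fk a f (/ x) < Fk a f (next_f a f x)) by (apply Fk_lt; lra); lra.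
  - rewrite Heq in HFy; lra.
Qed.

Lemma next_f_ge_inv x : 1 <= x -> / x <= next_f a f x.
Proof.
  intros Hx; destruct (Rle_lt_or_eq_dec 1 x Hx) as [Hx1|<-].
  - left; apply next_f_gt_inv, Hx1.
  - rewrite next_f_one, Rinv_1; apply Rle_refl.
Qed.

Lemma next_f_lt u v : 1 <= u -> u < v -> next_f a f v < next_f a f u.
Proof.
  intros Hu Huv.
  destruct (next_f_spec u Hu) as [Hyu HFu], (next_f_spec v ltac:(lra)) as [Hyv HFv].
  destruct (Rlt_or_le (next_f a f v) (next_f a f u)) as [|Hle]; auto.
  assert (H := Fk_decr (next_f a f u) (next_f a f v) ltac:(lra) Hle ltac:(lra)).
  assert (0 < a * (v - u)) by (apply Rmult_lt_0_compat; lra); lra.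
Qed.

Lemma next_f_decr u v : 1 <= u -> u <= v -> next_f a f v <= next_f a f u.
Proof.
  intros Hu [Huv|<-]; [left; apply next_f_lt; auto|apply Rle_refl].
Qed.

Lemma Gk_next_f x : 1 <= x -> Gk a (next_f a f) x = Gk a f (/ next_f a f x).
Proof.
  intros Hx; destruct (next_f_spec x Hx) as [Hy HFy].
  rewrite Fk_Gk in HFy; unfold Gk at 1; unfold psi, Rdiv in *; lra.
Qed.

Lemma next_f_Gk_incr u v : 1 <= u -> u <= v -> Gk a (next_f a f) u <= Gk a (next_f a f) v.
Proof.
  intros Hu Huv; rewrite !Gk_next_f by lra.
  destruct (next_f_spec u Hu) as [Hyu _], (next_f_spec v ltac:(lra)) as [Hyv _].
  apply (adm_Gk_incr a f Hf); [apply Rinv_ge_1, Hyu|].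
  apply Rinv_le_contravar; [lra|apply next_f_decr; lra].
Qed.

Lemma next_f_inv_lipschitz u v X : 1 <= u -> u <= v -> v <= X ->
  (/ next_f a f v - / next_f a f u) * (/ (X * X) + 1 - a) <= a * (v - u).
Proof.
  intros Hu Huv HvX.
  destruct (next_f_spec u Hu) as [Hyu HFu], (next_f_spec v ltac:(lra)) as [Hyv HFv].
  assert (Hyz := next_f_decr u v Hu Huv).
  rewrite Fk_Gk in HFu, HFv.
  set (u' := / next_f a f u) in *; set (v' := / next_f a f v) in *.
  assert (Hu' : 1 <= u') by (apply Rinv_ge_1, Hyu).
  assert (Huv' : u' <= v') by (apply Rinv_le_contravar; lra).
  assert (Hv'X : v' <= X).
  { apply Rle_trans with v; auto; rewrite <- (Rinv_inv v).
    apply Rinv_le_contravar; [apply Rinv_0_lt_compat; lra|apply next_f_ge_inv; lra]. }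
  assert (HG : Gk a f u' <= Gk a f v') by (apply (adm_Gk_incr a f Hf); auto).
  assert (E : a * (v - u) = (1 - a) * (v' - u') + (/ u' - / v') + (Gk a f v' - Gk a f u')).
  { replace (next_f a f u) with (/ u') in HFu by (unfold u'; field; lra).
    replace (next_f a f v) with (/ v') in HFv by (unfold v'; field; lra).
    unfold Rdiv in HFu, HFv; rewrite Rinv_inv in HFu, HFv; lra. }
  assert (Hinv : (v' - u') * / (X * X) <= / u' - / v').
  { replace (/ u' - / v') with ((v' - u') * / (u' * v')) by (field; lra).
    apply Rmult_le_compat_l; [lra|apply Rinv_le_contravar; [nra|apply Rmult_le_compat; lra]]. }
  lra.
Qed.

Lemma next_f_smooth : exists h c, 0 < c < 1 /\ (forall x, 1 <= x -> h x = next_f a f x) /\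
  (forall x, c < x -> 0 < h x) /\ Cinf (fun x => c < x) h.
Proof.
  destruct next_f_extension as (g & c & Hc & Hpos & Hg & Hgspec).
  exists g, c; split; [auto|split; [|split; auto]].
  intros x Hx; destruct (Hgspec x Hx); symmetry; apply next_f_eq; auto.
Qed.

Lemma admissible_next_f : admissible a (next_f a f).
Proof.
  split.
  - exact next_f_one.
  - exact next_f_gt_inv.
  - exact next_f_decr.
  - exact next_f_Gk_incr.
  - exact next_f_inv_lipschitz.
  - exact next_f_smooth.
Qed.

Lemma next_f_lim_infty : is_lim (next_f a f) p_infty 0.
Proof.
  apply is_lim_spec; intros eps; simpl.
  assert (Heps := cond_pos eps).
  set (y0 := Rmin (eps / 2) 1).
  assert (Hy0 : 0 < y0 <= 1 /\ y0 < eps)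
    by (unfold y0; assert (H := Rmin_pos (eps / 2) 1 ltac:(lra) ltac:(lra));
        assert (Hl := Rmin_l (eps / 2) 1); assert (Hr := Rmin_r (eps / 2) 1); lra).
  exists (Rmax 1 (Fk a f y0 / a)); intros x Hx.
  assert (Hx1 := Rle_lt_trans _ _ _ (Rmax_l _ _) Hx).
  assert (Hx2 := Rle_lt_trans _ _ _ (Rmax_r _ _) Hx).
  destruct (next_f_spec x ltac:(lra)) as [Hy HFy].
  rewrite Rminus_0_r, Rabs_pos_eq by lra.
  destruct (Rlt_or_le (next_f a f x) y0) as [|Hle]; [lra|exfalso].
  assert (H := Fk_decr y0 (next_f a f x) ltac:(lra) Hle ltac:(lra)).
  assert (a * (Fk a f y0 / a) < a * x) by (apply Rmult_lt_compat_l; lra).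
  replace (a * (Fk a f y0 / a)) with (Fk a f y0) in * by (field; lra); lra.
Qed.

Lemma Fk_lim_0 : filterlim (Fk a f) (at_right 0) (Rbar_locally p_infty).
Proof.
  apply (filterlim_ge_p_infty (fun y => a * / y)).
  - exists (mkposreal 1 Rlt_0_1); intros y Hy Hy0.
    change (Rabs (y - 0) < 1) in Hy; rewrite Rminus_0_r, Rabs_pos_eq in Hy by lra.
    apply Fk_ge; lra.
  - eapply filterlim_comp; [apply filterlim_Rinv_0_right|].
    replace p_infty with (Rbar_mult a p_infty) at 2; [apply filterlim_Rbar_mult_l|].
    simpl; destruct (Rle_dec 0 a) as [Ha0|Ha0]; [|lra].
    destruct (Rle_lt_or_eq_dec 0 a Ha0); [reflexivity|lra].
Qed.

Lemma Fk_smooth_on_Ioc01 : smooth_on_Ioc01 (Fk a f).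
Proof.
  destruct Fk_decreasing_extension as (F & b & Hb & HF & _ & HFf).
  exists F, (b - 1); split; [lra|split; auto].
  intros n y Hy; apply (HF n n); auto; lra.
Qed.

Lemma next_f_smooth_on_Ici1 : smooth_on_Ici1 (next_f a f).
Proof.
  destruct next_f_smooth as (h & c & Hc & Hh & _ & Hsmooth).
  exists h, (1 - c); split; [lra|split; auto].
  intros n x Hx; apply (Hsmooth n n); auto; lra.
Qed.

End Admissible.

(** * The sequence *)

Lemma next_f_lt_of_lt a f g : 0 < a <= 1 -> admissible a f -> admissible a g ->
  (forall u, 1 < u -> g u < f u) -> forall x, 1 < x -> next_f a g x < next_f a f x.
Proof.
  intros Ha Hf Hg Hgf x Hx.
  destruct (next_f_spec a f Ha Hf x ltac:(lra)) as [Hy HFy].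
  destruct (next_f_spec a g Ha Hg x ltac:(lra)) as [Hz HFz].
  assert (Hy1 : next_f a f x < 1)
    by (rewrite <- (next_f_one a f Ha Hf); apply next_f_lt; auto; lra).
  set (y := next_f a f x) in *.
  assert (Hu : 1 < / y) by (apply Rinv_gt_1; lra).
  assert (HG : Gk a g (/ y) < Gk a f (/ y)).
  { apply Rplus_lt_compat_r, psi_lt; [lra|apply (adm_pos a g Hg); lra|auto]. }
  assert (HFgy : Fk a g y < a * x) by (rewrite Fk_Gk in HFy |- *; lra).
  destruct (Rlt_or_le (next_f a g x) y) as [|Hle]; auto; exfalso.
  assert (H := Fk_decr a g Ha Hg y (next_f a g x) ltac:(lra) Hle ltac:(lra)); lra.
Qed.

Lemma admissible_const_1 a : 0 < a <= 1 -> admissible a (fun _ => 1).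
Proof.
  intros Ha; split.
  - reflexivity.
  - intros x Hx; rewrite <- Rinv_1; apply Rinv_lt_contravar; lra.
  - intros; apply Rle_refl.
  - intros u v Hu Huv; unfold Gk; nra.
  - intros u v X Hu Huv HvX; rewrite Rminus_diag, Rmult_0_l; nra.
  - exists (fun _ => 1), (1 / 2); split; [lra|split; [auto|split; [intros; lra|]]].
    intros n; apply Cn_const, open_gt.
Qed.

Lemma admissible_fseq a k : 0 < a <= 1 -> admissible a (fseq a k).
Proof.
  intros Ha; induction k as [|k IH]; [now apply admissible_const_1|].
  now apply admissible_next_f.
Qed.

Lemma fseq_succ_lt a k x : 0 < a <= 1 -> 1 < x -> fseq a (S k) x < fseq a k x.
Proof.
  intros Ha; revert x; induction k as [|k IH]; intros x Hx.
  - assert (H1 := admissible_const_1 a Ha).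
    assert (H := next_f_lt a _ Ha H1 1 x (Rle_refl 1) Hx).
    rewrite (next_f_one a _ Ha H1) in H; exact H.
  - apply (next_f_lt_of_lt a (fseq a k) (fseq a (S k))); auto; apply admissible_fseq; auto.
Qed.

Lemma fseq_nonincreasing a n k x : 0 < a <= 1 -> 1 <= x -> (k <= n)%nat -> fseq a n x <= fseq a k x.
Proof.
  intros Ha Hx Hkn; induction Hkn as [|n Hkn IH]; [apply Rle_refl|].
  apply Rle_trans with (fseq a n x); auto.
  destruct (Rle_lt_or_eq_dec 1 x Hx) as [Hx1|<-]; [left; apply fseq_succ_lt; auto|].
  rewrite !(adm_one a _ (admissible_fseq a _ Ha)); apply Rle_refl.
Qed.

(** * The pointwise limit *)

Lemma phi_one a : phi a 1 = 2 * a.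
Proof. unfold phi, psi; field. Qed.

Lemma phi_le_max a u x : 1 <= u <= x -> phi a u <= Rmax (phi a 1) (phi a x).
Proof.
  intros Hux.
  assert (E1 : phi a u - phi a 1 = (u - 1) * (2 * a - 1 - / u))
    by (unfold phi, psi; field; lra).
  assert (Ex : phi a u - phi a x = (u - x) * (2 * a - 1 - / (u * x)))
    by (unfold phi, psi; field; lra).
  destruct (Rle_or_lt (2 * a - 1) (/ u)) as [H|H].
  - apply Rle_trans with (phi a 1); [|apply Rmax_l].
    assert ((u - 1) * (2 * a - 1 - / u) <= 0) by nra; lra.
  - apply Rle_trans with (phi a x); [|apply Rmax_r].
    assert (/ (u * x) <= / u) by (apply Rinv_le_contravar; nra).
    assert ((u - x) * (2 * a - 1 - / (u * x)) <= 0) by nra; lra.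
Qed.

Lemma psi_root a B s q : a <= 1 -> 0 < s -> q = (B + sqrt (B ^ 2 + 4 * (1 - a))) / 2 ->
  (psi a s = B -> s = q) /\ (B <= psi a s -> q <= s).
Proof.
  intros Ha Hs Hq.
  set (r := sqrt (B ^ 2 + 4 * (1 - a))) in Hq.
  assert (Hr0 : 0 <= r) by apply sqrt_pos.
  assert (Hr2 : r * r = B ^ 2 + 4 * (1 - a)) by (apply sqrt_sqrt; nra).
  assert (HrB : B <= r) by nra.
  assert (Hfact : s * (psi a s - B) = (s - q) * (s - (B - r) / 2)).
  { unfold psi; rewrite Hq; field_simplify; [|lra].
    replace (r ^ 2) with (r * r) by ring; rewrite Hr2; field. }
  assert (Hpos : 0 < s - (B - r) / 2) by lra.
  split; intros HB.
  - rewrite HB, Rminus_diag, Rmult_0_r in Hfact.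
    symmetry in Hfact; apply Rmult_integral in Hfact; destruct Hfact; lra.
  - destruct (Rle_or_lt q s) as [|Hlt]; auto.
    assert (s * (psi a s - B) >= 0) by (apply Rle_ge, Rmult_le_pos; lra).
    assert ((s - q) * (s - (B - r) / 2) < 0) by (apply Rmult_neg_pos; lra); lra.
Qed.

Lemma is_lim_seq_psi a (s : nat -> R) (l : R) : is_lim_seq s l -> l <> 0 ->
  is_lim_seq (fun k => psi a (s k)) (psi a l).
Proof.
  intros Hs Hl; unfold psi, Rdiv.
  apply (is_lim_seq_minus' _ (fun k => (1 - a) * / s k)); auto.
  apply (is_lim_seq_scal_l _ (1 - a) (/ l)).
  apply (is_lim_seq_inv _ l Hs); congruence.
Qed.

Definition flim (a x : R) : R := real (Lim_seq (fun k => fseq a k x)).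

Definition Ginf (a u : R) : R := psi a (flim a u) + a * u.

Section Limit.

Variable a : R.
Hypothesis Ha : 0 < a <= 1.

Lemma flim_spec x : 1 <= x ->
  is_lim_seq (fun k => fseq a k x) (flim a x) /\ / x <= flim a x /\
  forall k, flim a x <= fseq a k x.
Proof.
  intros Hx.
  assert (Hb : forall k, / x <= fseq a k x)
    by (intros k; apply (adm_bounds a _ (admissible_fseq a k Ha)), Hx).
  assert (Hlim : is_lim_seq (fun k => fseq a k x) (flim a x)).
  { apply Lim_seq_correct', (ex_finite_lim_seq_decr _ (/ x)); auto.
    intros n; apply fseq_nonincreasing; auto. }
  split; [exact Hlim|split].
  - apply (is_lim_seq_le (fun _ => / x) _ (/ x) _ Hb (is_lim_seq_const _) Hlim).
  - intros k.
    apply (is_lim_seq_le_loc (fun n => fseq a n x) (fun _ => fseq a k x) (flim a x) (fseq a k x));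
      [exists k; intros n Hn; apply fseq_nonincreasing; auto|exact Hlim|apply is_lim_seq_const].
Qed.

Lemma flim_pos x : 1 <= x -> 0 < flim a x.
Proof.
  intros Hx; destruct (flim_spec x Hx) as (_ & H & _).
  assert (0 < / x) by (apply Rinv_0_lt_compat; lra); lra.
Qed.

Lemma inv_flim_bounds x : 1 <= x -> 1 <= / flim a x <= x.
Proof.
  intros Hx; destruct (flim_spec x Hx) as (_ & Hlow & Hup).
  assert (Hpos := flim_pos x Hx).
  assert (flim a x <= 1) by (apply Rle_trans with (fseq a 0 x); [apply Hup|simpl; lra]).
  split; [apply Rinv_ge_1; lra|].
  rewrite <- (Rinv_inv x) at 2; apply Rinv_le_contravar; [apply Rinv_0_lt_compat; lra|exact Hlow].
Qed.

Lemma is_lim_seq_fseq_along (v : nat -> R) p : (forall k, 1 <= v k <= p) -> is_lim_seq v p ->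
  is_lim_seq (fun k => fseq a k (v k)) (flim a p).
Proof.
  intros Hv Hvp.
  assert (Hp : 1 <= p) by (destruct (Hv 0%nat); lra).
  set (c := / (p * p) + 1 - a).
  assert (Hc : 0 < c) by (assert (0 < / (p * p)) by (apply Rinv_0_lt_compat; nra); unfold c; lra).
  assert (Hsq : forall k, / fseq a k p - a * (p - v k) / c <= / fseq a k (v k) <= / fseq a k p).
  { intros k; destruct (Hv k) as [Hv1 Hv2]; assert (Hk := admissible_fseq a k Ha); split.
    - assert (H := adm_inv_lipschitz a _ Hk (v k) p p Hv1 Hv2 (Rle_refl p)); fold c in H.
      apply (Rmult_le_reg_r c); auto; unfold Rdiv.
      rewrite Rmult_minus_distr_r, Rmult_assoc, Rinv_l, Rmult_1_r; lra.
    - apply Rinv_le_contravar; [apply (adm_pos a _ Hk); lra|apply (adm_decr a _ Hk); auto]. }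
  destruct (flim_spec p Hp) as (Hlim & _); assert (Hpos := flim_pos p Hp).
  assert (Hinv : is_lim_seq (fun k => / fseq a k p) (/ flim a p))
    by (apply (is_lim_seq_inv _ (flim a p)); auto; intro E; injection E; lra).
  assert (Hlow : is_lim_seq (fun k => / fseq a k p - a * (p - v k) / c) (/ flim a p)).
  { replace (Finite (/ flim a p)) with (Finite (/ flim a p - a * (p - p) / c))
      by (f_equal; field; lra).
    apply (is_lim_seq_minus' _ (fun k => a * (p - v k) / c)); auto.
    apply (is_lim_seq_scal_r (fun k => a * (p - v k)) (/ c) (a * (p - p))).
    apply (is_lim_seq_scal_l (fun k => p - v k) a (p - p)).
    apply (is_lim_seq_minus' (fun _ => p)); auto; apply is_lim_seq_const. }
  assert (Hmid := is_lim_seq_le_le _ _ _ _ Hsq Hlow Hinv).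
  apply (is_lim_seq_ext (fun k => / / fseq a k (v k))).
  - intros k; rewrite Rinv_inv; reflexivity.
  - replace (Finite (flim a p)) with (Rbar_inv (/ flim a p))
      by (simpl; rewrite Rinv_inv; reflexivity).
    apply is_lim_seq_inv; auto; simpl; intro E; injection E; apply Rinv_neq_0_compat; lra.
Qed.

Lemma is_lim_seq_Gk_fseq (u : nat -> R) (x : R) : 1 <= x -> is_lim_seq u x ->
  is_lim_seq (fun k => fseq a k (u k)) (flim a x) ->
  is_lim_seq (fun k => Gk a (fseq a k) (u k)) (Ginf a x).
Proof.
  intros Hx Hu Hf; unfold Gk, Ginf.
  apply (is_lim_seq_plus' _ (fun k => a * u k)).
  - apply is_lim_seq_psi; auto; apply Rgt_not_eq, flim_pos, Hx.
  - apply (is_lim_seq_scal_l _ a x Hu).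
Qed.

(* Both sides are limits of G_{k+1}(x) = G_k(1/f_{k+1}(x)); on the right the
   Lipschitz bound controls f_k at the moving point 1/f_{k+1}(x). *)
Lemma Ginf_inv_flim x : 1 <= x -> Ginf a x = Ginf a (/ flim a x).
Proof.
  intros Hx.
  destruct (flim_spec x Hx) as (Hlim & _ & Hup); assert (Hpos := flim_pos x Hx).
  set (p := / flim a x); set (v := fun k => / fseq a (S k) x).
  assert (Hv : forall k, 1 <= v k <= p).
  { intros k; assert (Hk := admissible_fseq a (S k) Ha).
    assert (fseq a (S k) x <= 1) by apply (adm_bounds a _ Hk), Hx.
    split; [apply Rinv_ge_1; split; [apply (adm_pos a _ Hk)|]; auto|].
    apply Rinv_le_contravar; auto. }
  assert (Hvp : is_lim_seq v p).
  { apply (is_lim_seq_incr_1 (fun k => / fseq a k x)).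
    apply (is_lim_seq_inv _ (flim a x)); auto; intro E; injection E; lra. }
  assert (HG : forall k, Gk a (fseq a (S k)) x = Gk a (fseq a k) (v k))
    by (intros k; apply (Gk_next_f a (fseq a k) Ha (admissible_fseq a k Ha)), Hx).
  assert (Hleft : is_lim_seq (fun k => Gk a (fseq a (S k)) x) (Ginf a x)).
  { apply (is_lim_seq_incr_1 (fun k => Gk a (fseq a k) x)).
    apply (is_lim_seq_Gk_fseq (fun _ => x)); auto; apply is_lim_seq_const. }
  assert (Hright : is_lim_seq (fun k => Gk a (fseq a (S k)) x) (Ginf a p)).
  { apply (is_lim_seq_ext (fun k => Gk a (fseq a k) (v k))); [intros k; auto|].
    destruct (Hv 0%nat); apply is_lim_seq_Gk_fseq; [lra|auto|apply is_lim_seq_fseq_along; auto]. }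
  assert (E := is_lim_seq_unique _ _ Hleft); rewrite (is_lim_seq_unique _ _ Hright) in E.
  injection E; auto.
Qed.

Lemma Ginf_eq_phi x : 1 <= x -> exists u, 1 <= u <= x /\ Ginf a x = phi a u.
Proof.
  intros Hx.
  set (it := fun n => Nat.iter n (fun u => / flim a u) x).
  assert (Hit : forall n, 1 <= it n <= x /\ it (S n) <= it n /\ Ginf a (it n) = Ginf a x).
  { induction n as [|n (Hn & _ & HGn)].
    - destruct (inv_flim_bounds x Hx); simpl; repeat split; lra.
    - assert (Hb1 := inv_flim_bounds (it n) ltac:(lra)).
      change (it (S n)) with (/ flim a (it n)) in *.
      assert (Hb2 := inv_flim_bounds (/ flim a (it n)) ltac:(lra)).
      change (it (S (S n))) with (/ flim a (/ flim a (it n))).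
      split; [lra|split; [lra|]].
      rewrite <- Ginf_inv_flim; auto; lra. }
  destruct (ex_finite_lim_seq_decr it 1) as [u Hu]; [apply Hit|apply Hit|].
  assert (Hu1 : 1 <= u)
    by (apply (is_lim_seq_le (fun _ => 1) it 1 u); [apply Hit|apply is_lim_seq_const|auto]).
  assert (Hux : u <= x)
    by (apply (is_lim_seq_le it (fun _ => x) u x); [apply Hit|auto|apply is_lim_seq_const]).
  exists u; split; [lra|].
  assert (HS : is_lim_seq (fun n => it (S n)) u) by (apply (is_lim_seq_incr_1 it); auto).
  assert (Hphi : is_lim_seq (fun n => psi a (/ it (S n)) + a * it n) (phi a u)).
  { apply (is_lim_seq_plus' _ (fun n => a * it n)); [|apply (is_lim_seq_scal_l it a u Hu)].
    apply is_lim_seq_psi; [|apply Rinv_neq_0_compat; lra].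
    apply (is_lim_seq_inv _ u); auto; intro E; injection E; lra. }
  assert (Hconst : is_lim_seq (fun n => psi a (/ it (S n)) + a * it n) (Ginf a x)).
  { apply (is_lim_seq_ext (fun _ => Ginf a x)); [|apply is_lim_seq_const].
    intros n; destruct (Hit n) as (Hn & _ & HGn); rewrite <- HGn; unfold Ginf.
    change (it (S n)) with (/ flim a (it n)); rewrite Rinv_inv; reflexivity. }
  assert (E := is_lim_seq_unique _ _ Hconst); rewrite (is_lim_seq_unique _ _ Hphi) in E.
  injection E; auto.
Qed.

Lemma Ginf_eq_max x : 1 <= x -> Ginf a x = Rmax (2 * a) (phi a x).
Proof.
  intros Hx; apply Rle_antisym.
  - destruct (Ginf_eq_phi x Hx) as [u [Hu ->]]; rewrite <- (phi_one a).
    apply phi_le_max, Hu.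
  - apply Rmax_lub.
    + apply (is_lim_seq_le (fun _ => 2 * a) (fun k => Gk a (fseq a k) x) (2 * a) (Ginf a x)).
      * intros k; assert (Hk := admissible_fseq a k Ha).
        rewrite <- (Gk_one a _ Hk); apply (adm_Gk_incr a _ Hk); lra.
      * apply is_lim_seq_const.
      * apply (is_lim_seq_Gk_fseq (fun _ => x)); auto; [apply is_lim_seq_const|apply flim_spec, Hx].
    + destruct (flim_spec x Hx) as (_ & Hlow & _).
      apply Rplus_le_compat_r, psi_le; auto; [lra|apply Rinv_0_lt_compat; lra].
Qed.

Lemma flim_eq_f_inf x : 1 <= x -> flim a x = f_inf a x.
Proof.
  intros Hx; assert (Hpos := flim_pos x Hx); destruct (flim_spec x Hx) as (_ & Hlow & _).
  assert (HG := Ginf_eq_max x Hx); unfold Ginf, phi in HG.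
  set (q := (a * (2 - x) + sqrt (a ^ 2 * (2 - x) ^ 2 + 4 * (1 - a))) / 2).
  destruct (psi_root a (a * (2 - x)) (flim a x) q ltac:(lra) Hpos)
    as [Heq Hge]; [unfold q; rewrite Rpow_mult_distr; reflexivity|].
  assert (Hq : q <= flim a x).
  { apply Hge; assert (H := Rmax_l (2 * a) (psi a (/ x) + a * x)); lra. }
  unfold f_inf; fold q.
  destruct (Rle_or_lt (psi a (/ x) + a * x) (2 * a)) as [Hle|Hlt].
  - rewrite Rmax_left in HG by lra.
    rewrite Rmax_right; [apply Heq; lra|rewrite <- Heq; lra].
  - rewrite Rmax_right in HG by lra.
    assert (E : flim a x = / x) by (apply (psi_inj a); [lra|lra|apply Rinv_0_lt_compat; lra|lra]).
    rewrite Rmax_left; lra.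
Qed.

End Limit.

Theorem proposition1 (alpha : R) (Ha : 0 < alpha <= 1) :
  (* well-definedness: for x >= 1 the max defining f_{k+1}(x) exists *)
  (forall (k : nat) (x : R), 1 <= x ->
     is_max_of (sol_set alpha (fseq alpha k) x) (fseq alpha (S k) x)) /\
  (* (a) *)
  (forall k : nat, (1 <= k)%nat ->
     (forall x y, 1 <= x -> x < y -> fseq alpha k y < fseq alpha k x) /\
     smooth_on_Ici1 (fseq alpha k) /\
     fseq alpha k 1 = 1 /\
     is_lim (fseq alpha k) p_infty 0 /\
     (forall x, 1 < x -> / x < fseq alpha k x)) /\
  (* (b) *)
  (forall k : nat,
     (forall y z, 0 < y -> y < z -> z <= 1 -> Fseq alpha k z < Fseq alpha k y) /\
     smooth_on_Ioc01 (Fseq alpha k) /\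
     filterlim (Fseq alpha k) (at_right 0) (Rbar_locally p_infty) /\
     Fseq alpha k 1 = alpha) /\
  (* (c) *)
  (forall (k : nat) (x : R), 1 < x -> fseq alpha (S k) x < fseq alpha k x) /\
  (* (d) *)
  (forall x : R, 1 <= x -> is_lim_seq (fun k => fseq alpha k x) (f_inf alpha x)).
Proof.
  assert (Hadm := fun k => admissible_fseq alpha k Ha).
  split; [intros k x Hx; exact (next_f_is_max alpha _ Ha (Hadm k) x Hx)|].
  split; [|split; [|split]].
  - intros [|k] Hk; [lia|].
    split; [intros x y Hx Hxy; apply next_f_lt; auto|].
    split; [apply next_f_smooth_on_Ici1; auto|].
    split; [apply next_f_one; auto|].
    split; [apply next_f_lim_infty; auto|].
    intros x Hx; apply next_f_gt_inv; auto.
  - intros k; unfold Fseq.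
    split; [intros y z Hy Hyz Hz; apply Fk_lt; auto|].
    split; [apply Fk_smooth_on_Ioc01; auto|].
    split; [apply Fk_lim_0; auto|].
    apply Fk_one, Hadm.
  - intros k x Hx; apply fseq_succ_lt; auto.
  - intros x Hx; rewrite <- flim_eq_f_inf by auto; apply flim_spec; auto.
Qed.
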